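(* For every set $X=\{X^1,\dots,X^m\}\subseteq S_n$ of $m\ge1$ distinct elements, $$\Big|\bigcap_{i=1}^m\mathrm{Elim}(\{X^i\})\Big|=3^{z_X}\Big(-(-2)^{m-1}+\sum_{\alpha\in S_m}(-1)^{z(\alpha)}\,2^{\,z(\alpha)+|\mathrm{BSp}(X,\alpha)|}\Big).$$
   Context: $S_n$ is the set of all nonzero $n$-tuples in $\{-1,0,1\}^n$ whose first nonzero entry equals $1$. A tuple $t=(t_1,\dots,t_n)\in\{1,0,-1,u\}^n$ ($u$ a formal symbol) eliminates $s\in S_n$ if: (i) $t_i\neq0$ and $s_i\neq0$ for some $i$; (ii) there is $k\in\{+1,-1\}$ with $t_i=ks_i$ for all $i$ with $s_i\neq0$ and $t_i\neq0$; (iii) $s_i=0$ whenever $t_i=u$. For $X\subseteq S_n$, $\mathrm{Elim}(X)$ is the set of elements of $S_n$ eliminated by at least one element of $X$. $M_X$ is the $m\times n$ matrix whose $i$-th row is $X^i$; $z_X$ is the number of zero columns of $M_X$. For a tuple $\alpha$, $z(\alpha)$ is the number of its zero coordinates. For $\alpha\in S_m$, $\mathrm{BSp}(X,\alpha)$ is the set of indices $c\in\{1,\dots,n\}$ such that the $c$-th column of $M_X$ is nonzero and equals $\pm(a_1\alpha_1,\dots,a_m\alpha_m)^T$ for some $(a_1,\dots,a_m)\in\{0,1\}^m\setminus\{(0,\dots,0)\}$. *)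

From HB Require Import structures.
From mathcomp Require Import all_boot all_order all_algebra.
Set Implicit Arguments. Unset Strict Implicit. Unset Printing Implicit Defensive.
Import GRing.Theory Num.Theory.
Local Open Scope ring_scope.

(* Entries of {-1,0,1} are encoded by 'I_3 : 0 |-> 0, 1 |-> 1, 2 |-> -1. *)
Definition ent (x : 'I_3) : int :=
  if val x == 0%N then 0 else if val x == 1%N then 1 else -1.

Definition vec (n : nat) := {ffun 'I_n -> 'I_3}.

Definition coord n (s : vec n) (i : 'I_n) : int := ent (s i).

Definition Sn (n : nat) : {set vec n} :=
  [set s : vec n | [exists i, coord s i != 0] &&
     [exists i : 'I_n, [&& coord s i == 1 &
        [forall j : 'I_n, (j < i)%N ==> (coord s j == 0)]]]].

(* Tuples in {1,0,-1,u}^n: None stands for the formal symbol u. *)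
Definition eliminates n (t : 'I_n -> option int) (s : vec n) : bool :=
  [&& [exists i, (t i != Some 0) && (coord s i != 0)],
      [exists k : bool, forall i,
         ((coord s i != 0) && (t i != Some 0)) ==>
           (t i == Some ((-1) ^+ k * coord s i))] &
      [forall i, (t i == None) ==> (coord s i == 0)]].

Definition toE n (x : vec n) : 'I_n -> option int := fun i => Some (coord x i).

Definition Elim n (X : {set vec n}) : {set vec n} :=
  [set s in Sn n | [exists x in X, eliminates (toE x) s]].

(* M_X has rows X i; its (i,c) entry is coord (X i) c. *)
Definition zX m n (X : 'I_m -> vec n) : nat :=
  #|[set c : 'I_n | [forall i, coord (X i) c == 0]]|.

Definition zcnt m (a : vec m) : nat := #|[set i : 'I_m | coord a i == 0]|.

Definition BSp m n (X : 'I_m -> vec n) (al : vec m) : {set 'I_n} :=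
  [set c : 'I_n | [exists i, coord (X i) c != 0] &&
     [exists a : {ffun 'I_m -> bool}, [exists i, a i] &&
        [exists k : bool, forall i,
           coord (X i) c == (-1) ^+ k * ((nat_of_bool (a i))%:R * coord al i)]]].

(* The indicator that [x] eliminates [s] is a signed sum over the entries
   [e] of {0, 1, -1}: for [e = 1, -1] the indicator that [x] agrees with [e s] on
   the common support, for [e = 0] the value [-2] if the supports are disjoint.
   Indeed disjoint supports make both signs agree ([1 + 1 - 2 = 0]), while
   meeting supports allow at most one sign. Multiplying over the rows of [M_X]
   turns the count into a sum over sign patterns [al] of [(-2)^z(al)] times the
   number of [s] fitting [al], and this number factors over the columns: three
   choices of [s_c] in a zero column, two in a column of [BSp X al], one
   otherwise. Both sums are invariant under negation, exactly one of [s] and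
   [-s] lies in [S] when [s <> 0], and the zero vector contributes [0] on the
   side of [s] and [(-2)^m] on the side of [al]; halving gives the formula. *)

From HB Require Import structures.
From mathcomp Require Import all_boot all_order all_algebra.
From mathcomp Require Import ring.
Import GRing.Theory Num.Theory.
Local Open Scope ring_scope.
Set Implicit Arguments. Unset Strict Implicit.

Lemma ent_cases (x : 'I_3) : [\/ ent x = 0, ent x = 1 | ent x = -1].
Proof. by case: x => [[|[|[|k]]] Hk] //=; [constructor 1|constructor 2|constructor 3]. Qed.

Lemma ent_eq0 (x : 'I_3) : (ent x == 0) = (val x == 0%N).
Proof. by case: x => [[|[|[|k]]] Hk]. Qed.

Lemma sum_ent (R : nmodType) (F : int -> R) : \sum_b F (ent b) = F 0 + F 1 + F (-1).
Proof. by rewrite !big_ord_recl big_ord0 addr0 addrA. Qed.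

Definition oppI3 (x : 'I_3) : 'I_3 :=
  if val x == 0%N then x else if val x == 1%N then inord 2 else inord 1.

Lemma ent_opp x : ent (oppI3 x) = - ent x.
Proof. by case: x => [[|[|[|k]]] Hk] //; rewrite /oppI3 /ent /= inordK. Qed.

Lemma oppI3K : involutive oppI3.
Proof.
by move=> x; apply/val_inj; case: x => [[|[|[|k]]] Hk] //; rewrite /oppI3 /= ?inordK.
Qed.

Definition oppv p (s : vec p) : vec p := [ffun i => oppI3 (s i)].
Definition zerov p : vec p := [ffun _ => ord0].

Lemma coord_oppv p (s : vec p) i : coord (oppv s) i = - coord s i.
Proof. by rewrite /coord ffunE ent_opp. Qed.

Lemma coord_zerov p i : coord (zerov p) i = 0.
Proof. by rewrite /coord ffunE. Qed.

Lemma oppvK p : involutive (@oppv p).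
Proof. by move=> s; apply/ffunP => i; rewrite !ffunE oppI3K. Qed.

Lemma oppv_inj p : injective (@oppv p).
Proof. exact: inv_inj (@oppvK p). Qed.

Lemma oppv_eq0 p (s : vec p) : (oppv s == zerov p) = (s == zerov p).
Proof.
have oppv0 : oppv (zerov p) = zerov p by apply/ffunP => i; rewrite !ffunE.
by rewrite -[in LHS]oppv0 (inj_eq (@oppv_inj p)).
Qed.

Lemma vec_neq0P p (s : vec p) : reflect (exists i, coord s i != 0) (s != zerov p).
Proof.
apply: (iffP idP) => [s_neq0|[i s_i]]; last first.
  by apply: contraNneq s_i => ->; rewrite coord_zerov.
apply/existsP; apply: contraNT s_neq0 => /existsPn s0.
apply/eqP/ffunP => i; apply/val_inj.
by have := s0 i; rewrite ffunE negbK /coord ent_eq0 => /eqP.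
Qed.

Lemma Sn_neq0 p (s : vec p) : s \in Sn p -> s != zerov p.
Proof. by rewrite inE => /andP[/existsP ? _]; apply/vec_neq0P. Qed.

Lemma Sn_first p (s : vec p) i0 : coord s i0 != 0 ->
  (forall j : 'I_p, (j < i0)%N -> coord s j = 0) -> (s \in Sn p) = (coord s i0 == 1).
Proof.
move=> s_i0 s_lt; rewrite inE; apply/andP/eqP => [[_]|s_i0_1].
  case/existsP=> i /andP[/eqP s_i /forallP s_lti].
  case: (ltngtP i i0) => [lt_i|lt_i0|/val_inj <- //].
    by rewrite s_lt in s_i.
  by move: s_i0; rewrite (eqP (implyP (s_lti i0) lt_i0)) eqxx.
split; first by apply/existsP; exists i0.
apply/existsP; exists i0; rewrite s_i0_1 eqxx /=.
by apply/forallP => j; apply/implyP => /s_lt ->.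
Qed.

Lemma Sn_oppv p (s : vec p) : s != zerov p -> (oppv s \in Sn p) = (s \notin Sn p).
Proof.
case/vec_neq0P=> i1 s_i1.
have [i0 s_i0 i0_min] := @arg_minnP _ i1 (fun i => coord s i != 0) val s_i1.
have s_lt (j : 'I_p) : (j < i0)%N -> coord s j = 0.
  by move=> lt_j; apply/eqP; apply: contraTT lt_j => /i0_min; rewrite -leqNgt.
rewrite (Sn_first s_i0 s_lt) (@Sn_first _ _ i0); first last.
- by move=> j /s_lt; rewrite coord_oppv => ->; rewrite oppr0.
- by rewrite coord_oppv oppr_eq0.
by rewrite coord_oppv; move: s_i0; rewrite /coord; case: (ent_cases (s i0)) => ->.
Qed.

Lemma sum_vec_oppv_invariant p (R : zmodType) (h : vec p -> R) :
  (forall s, h (oppv s) = h s) ->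
  \sum_(s : vec p) h s = h (zerov p) + (\sum_(s in Sn p) h s) *+ 2.
Proof.
move=> h_opp; rewrite (bigD1 (zerov p)) //= (bigID (mem (Sn p))) /= mulr2n.
congr (_ + (_ + _)).
  by apply: eq_bigl => s; case: (boolP (s \in Sn p)) => [/Sn_neq0 ->|]; rewrite ?andbF.
rewrite (reindex_inj (@oppv_inj p)); apply: eq_big => s; last by rewrite h_opp.
rewrite oppv_eq0; have [->|s_neq0] /= := eqVneq s (zerov p).
  by apply/esym/negbTE/negP => /Sn_neq0; rewrite eqxx.
by rewrite Sn_oppv // negbK.
Qed.

Lemma prod_nat_of_bool (R : comPzSemiRingType) (I : finType) (P : pred I) :
  \prod_i ((P i : nat)%:R : R) = ([forall i, P i] : nat)%:R.
Proof.
have [/forallP P_all|/forallPn [i Pi]] := boolP [forall i, P i].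
  by apply: big1 => i _; rewrite P_all.
by rewrite (bigD1 i) //= (negbTE Pi) mul0r.
Qed.

Section Elimination.

Variable n : nat.
Implicit Types x s : vec n.

Definition meets x s := [exists c, (coord x c != 0) && (coord s c != 0)].

Definition agrees x s (e : int) :=
  [forall c, ((coord s c != 0) && (coord x c != 0)) ==> (coord x c == e * coord s c)].

Lemma eliminatesE x s :
  eliminates (toE x) s = meets x s && (agrees x s 1 || agrees x s (-1)).
Proof.
have eq_Some (a b : int) : (Some a == Some b) = (a == b) by apply/eqP/eqP => [[]|->].
rewrite /eliminates [[forall i, _]](_ : _ = true) ?andbT; last by apply/forallP.
congr (_ && _).
have agreesE (k : bool) :
    [forall i, ((coord s i != 0) && (toE x i != Some 0)) ==>
       (toE x i == Some ((-1) ^+ k * coord s i))] = agrees x s ((-1) ^+ k).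
  by apply: eq_forallb => c; rewrite /toE !eq_Some.
apply/existsP/orP => [[k]|[ag|ag]]; last 2 first.
- by exists false; rewrite agreesE expr0.
- by exists true; rewrite agreesE expr1.
by rewrite agreesE; case: k; [right|left].
Qed.

Lemma meets_agrees_opp x s : meets x s -> agrees x s 1 -> ~~ agrees x s (-1).
Proof.
case/existsP=> c /andP[x_c s_c] /forallP/(_ c) ag1; apply/negP => /forallP/(_ c).
rewrite s_c x_c /= in ag1 * => /eqP agN1; move: s_c.
by rewrite -eqNr -mulN1r -agN1 (eqP ag1) mul1r eqxx.
Qed.

Definition elim_weight x s (e : int) : int :=
  if e == 0 then -2 * (~~ meets x s : nat)%:R else (agrees x s e : nat)%:R.

Lemma sum_elim_weight x s :
  \sum_b elim_weight x s (ent b) = (eliminates (toE x) s : nat)%:R.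
Proof.
rewrite sum_ent /elim_weight eliminatesE eqxx oppr_eq0 oner_eq0 /=.
have [x_s|x_s] /= := boolP (meets x s).
  have [ag1|_] := boolP (agrees x s 1); last by rewrite mulr0 !add0r.
  by rewrite (negbTE (meets_agrees_opp x_s ag1)) mulr0 add0r addr0.
have agrees_all e : agrees x s e.
  apply/forallP => c; apply/implyP => /andP[s_c x_c].
  by move/existsPn: x_s => /(_ c); rewrite x_c s_c.
by rewrite !agrees_all mulr1.
Qed.

End Elimination.

Definition fits n m (X : 'I_m -> vec n) (al : vec m) (s : vec n) :=
  [forall i, if coord al i == 0 then ~~ meets (X i) s else agrees (X i) s (coord al i)].

Lemma expr_zcnt (R : pzSemiRingType) m (al : vec m) (x : R) :
  x ^+ zcnt al = \prod_i (if coord al i == 0 then x else 1).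
Proof. by rewrite -prodr_const big_mkcond; apply: eq_bigr => i _; rewrite inE. Qed.

Lemma prod_eliminates n m (X : 'I_m -> vec n) s :
  \prod_i ((eliminates (toE (X i)) s : nat)%:R : int) =
  \sum_(al : vec m) (-2) ^+ zcnt al * (fits X al s : nat)%:R.
Proof.
rewrite -(eq_bigr _ (fun i _ => sum_elim_weight (X i) s)) bigA_distr_bigA.
apply: eq_bigr => al _; rewrite expr_zcnt /fits -prod_nat_of_bool -big_split /=.
apply: eq_bigr => i _.
by rewrite /elim_weight; case: ifP; rewrite ?mul1r.
Qed.

Section Columns.

Variables (n m : nat) (X : 'I_m -> vec n) (al : vec m).

Definition col_fits (c : 'I_n) (e : int) :=
  [forall i, if coord al i == 0 then (e != 0) ==> (coord (X i) c == 0)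
     else ((e != 0) && (coord (X i) c != 0)) ==> (coord (X i) c == coord al i * e)].

Lemma fits_col s : fits X al s = [forall c, col_fits c (coord s c)].
Proof.
apply/forallP/forallP => s_fits => [c|i]; last first.
  case: ifP => al_i; last by apply/forallP => c; have := forallP (s_fits c) i; rewrite al_i.
  apply/existsPn => c; apply/negP => /andP[x_c s_c].
  by have := forallP (s_fits c) i; rewrite al_i s_c /= => /eqP x_c0; rewrite x_c0 eqxx in x_c.
apply/forallP => i; have := s_fits i; case: ifP => _; last by move/forallP/(_ c).
by move/existsPn/(_ c); rewrite negb_and negbK implybE orbC.
Qed.

Lemma col_fits0 c : col_fits c 0.
Proof. by apply/forallP => i; case: ifP. Qed.

Lemma BSp_col c : [exists i, coord (X i) c != 0] ->
  (c \in BSp X al) = col_fits c 1 || col_fits c (-1).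
Proof.
move=> col_neq0; rewrite inE col_neq0 /=.
have col_fitsE (k : bool) (a : {ffun 'I_m -> bool}) :
    (forall i, coord (X i) c == (-1) ^+ k * ((a i : nat)%:R * coord al i)) ->
    col_fits c ((-1) ^+ k).
  move=> Xc; apply/forallP => i; rewrite (eqP (Xc i)) signr_eq0 /=.
  case: ifP => [/eqP->|_]; first by rewrite !mulr0.
  by case: (a i); rewrite /= ?mul1r ?mul0r ?mulr0 ?eqxx // mulrC eqxx implybT.
apply/existsP/orP => [[a /andP[_ /existsP[k /forallP Xc]]]|fit].
  by have := col_fitsE _ _ Xc; case: k {Xc}; rewrite ?expr0 ?expr1; [right|left].
exists [ffun i => coord (X i) c != 0]; apply/andP; split.
  by case/existsP: col_neq0 => i Xi; apply/existsP; exists i; rewrite ffunE.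
have [k fitk] : exists k : bool, col_fits c ((-1) ^+ k).
  by case: fit => fit; [exists false; rewrite expr0 | exists true; rewrite expr1].
apply/existsP; exists k; apply/forallP => i; rewrite ffunE.
have := forallP fitk i; rewrite signr_eq0 /=; case: ifP => [/eqP->|_].
  by move/eqP->; rewrite !mulr0.
have [_ /eqP->|/negbNE/eqP->] := boolP (coord (X i) c != 0); last by rewrite mul0r mulr0.
by rewrite mul1r mulrC.
Qed.

Lemma sum_col_fits c :
  \sum_b ((col_fits c (ent b) : nat)%:R : int) =
  (if c \in [set c | [forall i, coord (X i) c == 0]] then 3 else 1) *
  (if c \in BSp X al then 2 else 1).
Proof.
rewrite (sum_ent (fun e => (col_fits c e : nat)%:R)) col_fits0 inE.
have [col0|] := boolP [forall i, coord (X i) c == 0].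
  have fit_all e : col_fits c e.
    apply/forallP => i; rewrite (eqP (forallP col0 i)) eqxx andbF.
    by case: ifP; rewrite ?implybT ?andbF.
  rewrite !fit_all inE [_ && _](_ : _ = false) //.
  by apply/negbTE/nandP; left; apply/existsPn => i; rewrite negbK (forallP col0 i).
rewrite negb_forall => col_neq0; rewrite (BSp_col col_neq0) mul1r.
suff : ~~ (col_fits c 1 && col_fits c (-1)).
  by case: (col_fits c 1); case: (col_fits c (-1)).
apply/negP => /andP[/forallP fit1 /forallP fitN1]; case/existsP: col_neq0 => i Xi.
move: (fit1 i) (fitN1 i); rewrite oner_eq0 oppr_eq0 oner_eq0 Xi /=.
case: ifP => [_ /eqP Xi0|_ /eqP Xi1 /eqP XiN1]; first by rewrite Xi0 eqxx in Xi.
by move: Xi; rewrite -eqNr {2}Xi1 XiN1 mulr1 mulrN1 opprK eqxx.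
Qed.

Lemma sum_fits :
  \sum_(s : vec n) ((fits X al s : nat)%:R : int) = 3 ^+ zX X * 2 ^+ #|BSp X al|.
Proof.
transitivity (\prod_c \sum_b ((col_fits c (ent b) : nat)%:R : int)).
  rewrite bigA_distr_bigA; apply: eq_bigr => s _.
  by rewrite fits_col -(@prod_nat_of_bool _ _ (fun c => col_fits c (coord s c))).
by rewrite (eq_bigr _ (fun c _ => sum_col_fits c)) big_split /= -!big_mkcond !prodr_const.
Qed.

End Columns.

Lemma zcnt_oppv m (al : vec m) : zcnt (oppv al) = zcnt al.
Proof. by apply: eq_card => i; rewrite !inE coord_oppv oppr_eq0. Qed.

Lemma zcnt_zerov m : zcnt (zerov m) = m.
Proof.
by rewrite -[RHS]card_ord; apply: eq_card => i; rewrite inE coord_zerov eqxx.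
Qed.

(* Every coordinate contributes the factor [-2 + 1 + 1 = 0]. *)
Lemma sum_sign_zcnt m : (0 < m)%N -> \sum_(al : vec m) (-2 : int) ^+ zcnt al = 0.
Proof.
move=> m_gt0; rewrite (eq_bigr _ (fun al _ => expr_zcnt al (-2 : int))).
rewrite -(bigA_distr_bigA (fun _ b => if ent b == 0 then -2 else 1 : int)).
rewrite (eq_bigr (fun _ => 0)) => [|i _].
  by rewrite prodr_const card_ord expr0n; case: m m_gt0.
by rewrite (sum_ent (fun e : int => if e == 0 then -2 else 1)).
Qed.

Section Negation.

Variables (n m : nat) (X : 'I_m -> vec n).

Lemma BSp_oppv al : BSp X (oppv al) = BSp X al.
Proof.
suff BSp_sub a : BSp X a \subset BSp X (oppv a).
  by apply/eqP; rewrite eqEsubset BSp_sub -{2}(oppvK al) BSp_sub.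
apply/subsetP => c; rewrite !inE => /andP[-> /existsP[b /andP[b_ne0 /existsP[k /forallP Xc]]]].
apply/existsP; exists b; rewrite b_ne0; apply/existsP; exists (~~ k).
apply/forallP => i; rewrite coord_oppv (eqP (Xc i)).
by apply/eqP; case: k {Xc} => /=; ring.
Qed.

Lemma BSp_zerov : BSp X (zerov m) = set0.
Proof.
apply/setP => c; rewrite !inE; apply/negP.
case/andP=> /existsP[i Xi] /existsP[a /andP[_ /existsP[k /forallP Xc]]].
by move: Xi; rewrite (eqP (Xc i)) coord_zerov !mulr0 eqxx.
Qed.

Lemma fits_oppv al s : fits X al (oppv s) = fits X (oppv al) s.
Proof.
apply: eq_forallb => i; rewrite coord_oppv oppr_eq0.
have meets_oppv x : meets x (oppv s) = meets x s.
  by apply: eq_existsb => c; rewrite coord_oppv oppr_eq0.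
have agrees_oppv x e : agrees x (oppv s) e = agrees x s (- e).
  by apply: eq_forallb => c; rewrite coord_oppv oppr_eq0 mulrN mulNr.
by case: ifP => _; [rewrite (meets_oppv (X i)) | rewrite agrees_oppv].
Qed.

Lemma fits_zerov al : fits X al (zerov n).
Proof.
apply/forallP => i; case: ifP => _.
  by apply/existsPn => c; rewrite coord_zerov eqxx andbF.
by apply/forallP => c; rewrite coord_zerov eqxx.
Qed.

End Negation.

Lemma mem_bigcap_Elim n m (X : 'I_m -> vec n) s : (0 < m)%N ->
  (s \in \bigcap_(i < m) Elim [set X i]) =
  (s \in Sn n) && [forall i, eliminates (toE (X i)) s].
Proof.
move=> m_gt0; apply/bigcapP/andP => [s_cap|[s_Sn /forallP s_elim] i _].
  split; first by have := s_cap (Ordinal m_gt0) isT; rewrite inE => /andP[].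
  apply/forallP => i; have := s_cap i isT.
  by rewrite inE => /andP[_ /existsP[x /andP[/set1P -> ]]].
by rewrite inE s_Sn; apply/existsP; exists (X i); rewrite set11 s_elim.
Qed.

Section Count.

Variables (n m : nat) (X : 'I_m -> vec n).
Hypothesis m_gt0 : (0 < m)%N.

Definition pattern_sum (s : vec n) : int :=
  \sum_(al : vec m) (-2) ^+ zcnt al * (fits X al s : nat)%:R.

Lemma card_bigcap_Elim :
  #|\bigcap_(i < m) Elim [set X i]|%:Z = \sum_(s in Sn n) pattern_sum s.
Proof.
rewrite -natz -sum1_card natr_sum big_mkcond [RHS]big_mkcond; apply: eq_bigr => s _.
rewrite mem_bigcap_Elim // /pattern_sum -prod_eliminates prod_nat_of_bool.
by case: (s \in Sn n); case: [forall _, _].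
Qed.

Lemma pattern_sum_oppv s : pattern_sum (oppv s) = pattern_sum s.
Proof.
rewrite /pattern_sum [RHS](reindex_inj (@oppv_inj m)); apply: eq_bigr => al _.
by rewrite fits_oppv zcnt_oppv.
Qed.

Lemma pattern_sum_zerov : pattern_sum (zerov n) = 0.
Proof.
rewrite /pattern_sum -[RHS](sum_sign_zcnt m_gt0); apply: eq_bigr => al _.
by rewrite fits_zerov mulr1.
Qed.

Definition BSp_weight (al : vec m) : int := (-2) ^+ zcnt al * 2 ^+ #|BSp X al|.

Lemma sum_pattern_sum : \sum_s pattern_sum s = 3 ^+ zX X * \sum_al BSp_weight al.
Proof.
rewrite exchange_big mulr_sumr; apply: eq_bigr => al _.
by rewrite -mulr_sumr sum_fits mulrCA.
Qed.

Lemma sum_BSp_weight :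
  \sum_al BSp_weight al = (-2) ^+ m + (\sum_(al in Sn m) BSp_weight al) *+ 2.
Proof.
rewrite (sum_vec_oppv_invariant (h := BSp_weight)) => [|al].
  by rewrite /BSp_weight zcnt_zerov BSp_zerov cards0 mulr1.
by rewrite /BSp_weight zcnt_oppv BSp_oppv.
Qed.

End Count.

(* The identity holds for any family [X]. *)
Theorem mainTheorem12 (n m : nat) (X : 'I_m -> vec n) :
  (0 < m)%N -> injective X -> (forall i, X i \in Sn n) ->
  (#|\bigcap_(i < m) Elim [set X i]|%:Z : int) =
    3 ^+ zX X * (- (-2) ^+ m.-1 +
      \sum_(al in Sn m) (-1) ^+ zcnt al * 2 ^+ (zcnt al + #|BSp X al|)).
Proof.
move=> m_gt0 _ _.
have := sum_vec_oppv_invariant (pattern_sum_oppv X).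
rewrite pattern_sum_zerov // add0r sum_pattern_sum sum_BSp_weight.
rewrite -card_bigcap_Elim // => card2.
rewrite (eq_bigr (BSp_weight X)) => [|al _]; last first.
  by rewrite /BSp_weight exprD mulrA -exprMn mulN1r.
apply: (@pmulrnI _ 2) => //; rewrite /= -card2.
have -> : (-2 : int) ^+ m = -2 * (-2) ^+ m.-1 by rewrite -exprS prednK.
ring.
Qed.
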